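(* Let $\alpha,\beta$ be fixed nonzero real numbers. There exist constants $C,N>0$, independent of $n$ and of the point set, such that for every $n>N$ and every set $P\subset\mathbb R^2$ of $n$ points, $$|\Pi_{\alpha,\beta}(P)|\le C n^2 .$$
   Context: For a finite set $P\subset\mathbb R^2$ and real numbers $\alpha,\beta$, define the set of ordered triples $$\Pi_{\alpha,\beta}(P)=\{(p,q,r)\in P\times P\times P:\ p\cdot q=\alpha \text{ and } p\cdot r=\beta\},$$ where $\cdot$ is the standard dot product on $\mathbb R^2$ (the points $p,q,r$ need not be distinct). *)

From Stdlib Require Import Reals List.
Import ListNotations.
Open Scope R_scope.

Definition pt := (R * R)%type.

Definition dot (p q : pt) : R := fst p * fst q + snd p * snd q.

Definition triples (P : list pt) : list (pt * pt * pt) :=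
  flat_map (fun p => flat_map (fun q => map (fun r => (p, q, r)) P) P) P.

(* Pi_{alpha,beta}(P) as a list; when P has no duplicates, its length is the
   cardinality of the set of triples. *)
Definition Pi (alpha beta : R) (P : list pt) : list (pt * pt * pt) :=
  filter (fun t => match t with (p, q, r) =>
            if Req_EM_T (dot p q) alpha then
              if Req_EM_T (dot p r) beta then true else false
            else false end) (triples P).

(* Fix q and count the pairs (p, r) with p.q = alpha and p.r = beta.  If q
   and r are linearly independent, these two linear equations determine p, so
   each r contributes at most one p.  If they are dependent, then alpha <> 0
   forces r = (beta / alpha) q, so all of these pairs share a single r and
   there are at most n of them.  Hence each q contributes at most 2n triples,
   and |Pi(P)| <= 2 n^2. *)

From Stdlib Require Import Reals List Lra Lia.
Open Scope R_scope.

Lemma list_sum_map_le {A : Type} (l : list A) (f g : A -> nat) :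
  (forall x, In x l -> (f x <= g x)%nat) ->
  (list_sum (map f l) <= list_sum (map g l))%nat.
Proof.
  induction l as [|x l IHl]; intros Hfg; simpl; [lia|].
  specialize (Hfg x (or_introl eq_refl)) as Hx.
  assert (Hl := IHl (fun y Hy => Hfg y (or_intror Hy))). lia.
Qed.

Lemma list_sum_map_add {A : Type} (l : list A) (f g : A -> nat) :
  list_sum (map (fun x => f x + g x)%nat l) =
  (list_sum (map f l) + list_sum (map g l))%nat.
Proof. induction l as [|x l IHl]; simpl; [reflexivity|]. rewrite IHl; lia. Qed.

Lemma list_sum_map_const {A : Type} (l : list A) (c : nat) :
  list_sum (map (fun _ => c) l) = (length l * c)%nat.
Proof. induction l as [|x l IHl]; simpl; [reflexivity|]. rewrite IHl; lia. Qed.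

Lemma list_sum_map_comm {A B : Type} (l1 : list A) (l2 : list B) (f : A -> B -> nat) :
  list_sum (map (fun x => list_sum (map (fun y => f x y) l2)) l1) =
  list_sum (map (fun y => list_sum (map (fun x => f x y) l1)) l2).
Proof.
  induction l1 as [|x l1 IHl1]; simpl.
  - induction l2; simpl; auto.
  - rewrite IHl1, <- list_sum_map_add. reflexivity.
Qed.

Lemma list_sum_map_le_single {A : Type} (l : list A) (f : A -> nat) (m : nat) :
  NoDup l -> (forall x, (f x <= m)%nat) ->
  (forall x y, In x l -> In y l -> f x <> 0%nat -> f y <> 0%nat -> x = y) ->
  (list_sum (map f l) <= m)%nat.
Proof.
  induction 1 as [|x l Hx Hl IHl]; intros Hm Hsingle; simpl; [lia|].
  destruct (Nat.eq_dec (f x) 0) as [Hfx|Hfx].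
  - rewrite Hfx. apply IHl; [exact Hm|]. intros; apply Hsingle; simpl; auto.
  - assert (Hrest : list_sum (map f l) = 0%nat).
    { rewrite (map_ext_in f (fun _ => 0%nat)), list_sum_map_const; [lia|].
      intros y Hy. destruct (Nat.eq_dec (f y) 0) as [|Hfy]; [assumption|].
      assert (x = y) by (apply Hsingle; simpl; auto). subst; contradiction. }
    specialize (Hm x). lia.
Qed.

Lemma list_sum_map_neq0 {A : Type} (l : list A) (f : A -> nat) :
  list_sum (map f l) <> 0%nat -> exists x, In x l /\ f x <> 0%nat.
Proof.
  induction l as [|x l IHl]; simpl; intros Hsum; [lia|].
  destruct (Nat.eq_dec (f x) 0) as [Hfx|Hfx]; [|eauto].
  destruct IHl as [y [Hy Hfy]]; [lia | eauto].
Qed.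

Lemma length_filter_flat_map {A B : Type} (h : B -> bool) (g : A -> list B) (l : list A) :
  length (filter h (flat_map g l)) =
  list_sum (map (fun x => length (filter h (g x))) l).
Proof.
  induction l as [|x l IHl]; simpl; [reflexivity|].
  rewrite filter_app, length_app, IHl. reflexivity.
Qed.

Lemma length_filter_map {A B : Type} (h : B -> bool) (g : A -> B) (l : list A) :
  length (filter h (map g l)) =
  list_sum (map (fun x => if h (g x) then 1%nat else 0%nat) l).
Proof.
  induction l as [|x l IHl]; simpl; [reflexivity|].
  destruct (h (g x)); simpl; rewrite IHl; reflexivity.
Qed.

Definition det (q r : pt) : R := fst q * snd r - snd q * fst r.

Lemma dot_eq_det_neq0 (p p' q r : pt) :
  dot p q = dot p' q -> dot p r = dot p' r -> det q r <> 0 -> p = p'.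
Proof.
  destruct p as [p1 p2], p' as [u1 u2], q as [q1 q2], r as [s1 s2].
  unfold dot, det; simpl. intros Hq Hr Hdet.
  assert (E1 : (p1 - u1) * (q1 * s2 - q2 * s1) = 0).
  { replace ((p1 - u1) * (q1 * s2 - q2 * s1)) with
      (s2 * ((p1 * q1 + p2 * q2) - (u1 * q1 + u2 * q2))
       - q2 * ((p1 * s1 + p2 * s2) - (u1 * s1 + u2 * s2))) by ring.
    rewrite Hq, Hr; ring. }
  assert (E2 : (p2 - u2) * (q1 * s2 - q2 * s1) = 0).
  { replace ((p2 - u2) * (q1 * s2 - q2 * s1)) with
      (q1 * ((p1 * s1 + p2 * s2) - (u1 * s1 + u2 * s2))
       - s1 * ((p1 * q1 + p2 * q2) - (u1 * q1 + u2 * q2))) by ring.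
    rewrite Hq, Hr; ring. }
  apply Rmult_integral in E1, E2.
  destruct E1, E2; try contradiction. f_equal; lra.
Qed.

Lemma dot_det_eq0_scale (a b : R) (p q r : pt) : a <> 0 ->
  dot p q = a -> dot p r = b -> det q r = 0 ->
  r = (b / a * fst q, b / a * snd q).
Proof.
  destruct p as [p1 p2], q as [q1 q2], r as [s1 s2].
  unfold dot, det; simpl. intros Ha Hq Hr Hdet.
  assert (E1 : s1 * a - b * q1 = - p2 * (q1 * s2 - q2 * s1)).
  { rewrite <- Hq, <- Hr; ring. }
  assert (E2 : s2 * a - b * q2 = p1 * (q1 * s2 - q2 * s1)).
  { rewrite <- Hq, <- Hr; ring. }
  rewrite Hdet, Rmult_0_r in E1, E2.
  f_equal; field_simplify_eq; lra.
Qed.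

Section CountingPi.
Variables (a b : R).

Definition Pi_indicator (p q r : pt) : nat :=
  if Req_EM_T (dot p q) a then if Req_EM_T (dot p r) b then 1%nat else 0%nat
  else 0%nat.

Lemma Pi_indicator_le1 (p q r : pt) : (Pi_indicator p q r <= 1)%nat.
Proof.
  unfold Pi_indicator.
  destruct (Req_EM_T (dot p q) a), (Req_EM_T (dot p r) b); lia.
Qed.

Lemma Pi_indicator_neq0 (p q r : pt) :
  Pi_indicator p q r <> 0%nat -> dot p q = a /\ dot p r = b.
Proof.
  unfold Pi_indicator.
  destruct (Req_EM_T (dot p q) a), (Req_EM_T (dot p r) b); auto; lia.
Qed.

Lemma length_Pi (P : list pt) :
  length (Pi a b P) =
  list_sum (map (fun p => list_sum (map (fun q =>
    list_sum (map (fun r => Pi_indicator p q r) P)) P)) P).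
Proof.
  unfold Pi, triples. rewrite length_filter_flat_map.
  apply f_equal, map_ext; intros p. rewrite length_filter_flat_map.
  apply f_equal, map_ext; intros q. rewrite length_filter_map.
  apply f_equal, map_ext; intros r. unfold Pi_indicator.
  destruct (Req_EM_T (dot p q) a), (Req_EM_T (dot p r) b); reflexivity.
Qed.

Definition fiber_count (P : list pt) (q r : pt) : nat :=
  list_sum (map (fun p => Pi_indicator p q r) P).

Lemma fiber_count_le_length (P : list pt) (q r : pt) :
  (fiber_count P q r <= length P)%nat.
Proof.
  unfold fiber_count. rewrite <- (Nat.mul_1_r (length P)), <- list_sum_map_const.
  apply list_sum_map_le; intros p _; apply Pi_indicator_le1.
Qed.

Lemma fiber_count_det_neq0 (P : list pt) (q r : pt) : NoDup P ->
  det q r <> 0 -> (fiber_count P q r <= 1)%nat.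
Proof.
  intros HP Hdet.
  apply list_sum_map_le_single; [exact HP | intros p; apply Pi_indicator_le1 |].
  intros p p' _ _ Hp Hp'.
  apply Pi_indicator_neq0 in Hp as [Hpq Hpr], Hp' as [Hp'q Hp'r].
  apply (dot_eq_det_neq0 p p' q r); congruence.
Qed.

Hypothesis ha : a <> 0.

Lemma fiber_count_det_eq0 (P : list pt) (q r : pt) :
  det q r = 0 -> fiber_count P q r <> 0%nat ->
  r = (b / a * fst q, b / a * snd q).
Proof.
  intros Hdet Hcount.
  destruct (list_sum_map_neq0 _ _ Hcount) as [p [_ Hp]].
  apply Pi_indicator_neq0 in Hp as [Hpq Hpr].
  exact (dot_det_eq0_scale a b p q r ha Hpq Hpr Hdet).
Qed.

Lemma Pi_fiber_le (P : list pt) (q : pt) : NoDup P ->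
  (list_sum (map (fiber_count P q) P) <= 2 * length P)%nat.
Proof.
  intros HP.
  set (collinear_count r :=
         if Req_EM_T (det q r) 0 then fiber_count P q r else 0%nat).
  assert (Hsplit : forall r, (fiber_count P q r <= 1 + collinear_count r)%nat).
  { intros r. unfold collinear_count.
    destruct (Req_EM_T (det q r) 0) as [|Hdet]; [lia|].
    assert (H1 := fiber_count_det_neq0 P q r HP Hdet). lia. }
  assert (Hcollinear : (list_sum (map collinear_count P) <= length P)%nat).
  { apply list_sum_map_le_single; [exact HP | |].
    - intros r; unfold collinear_count.
      destruct (Req_EM_T (det q r) 0); [apply fiber_count_le_length | lia].
    - intros r r' _ _; unfold collinear_count.
      destruct (Req_EM_T (det q r) 0) as [Hr0|]; [|contradiction].
      destruct (Req_EM_T (det q r') 0) as [Hr'0|]; [|contradiction].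
      intros Hr Hr'.
      rewrite (fiber_count_det_eq0 P q r Hr0 Hr), (fiber_count_det_eq0 P q r' Hr'0 Hr').
      reflexivity. }
  apply Nat.le_trans with (list_sum (map (fun r => 1 + collinear_count r) P))%nat.
  - apply list_sum_map_le; intros r _; apply Hsplit.
  - rewrite list_sum_map_add, list_sum_map_const. lia.
Qed.

Lemma length_Pi_le (P : list pt) : NoDup P ->
  (length (Pi a b P) <= 2 * length P * length P)%nat.
Proof.
  intros HP. rewrite length_Pi, list_sum_map_comm.
  rewrite (map_ext _ (fun q => list_sum (map (fiber_count P q) P))).
  2:{ intros q. apply list_sum_map_comm. }
  rewrite Nat.mul_comm, <- list_sum_map_const.
  apply list_sum_map_le; intros q _. apply Pi_fiber_le, HP.
Qed.

End CountingPi.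

Theorem theorem1 (alpha beta : R) (ha : alpha <> 0) (hb : beta <> 0) :
  exists C N : R, 0 < C /\ 0 < N /\
    forall (n : nat) (P : list pt),
      INR n > N -> NoDup P -> length P = n ->
      INR (length (Pi alpha beta P)) <= C * INR n ^ 2.
Proof.
  exists 2, 1. split; [lra | split; [lra |]].
  intros n P _ HP HPn.
  assert (Hle := le_INR _ _ (length_Pi_le alpha beta ha P HP)).
  rewrite HPn, !mult_INR in Hle. simpl in Hle |- *. lra.
Qed.
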